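(* Let $s\in(0,1)$. Given two arbitrary constants $C_1,C_2>0$, there exists a function $G:\mathbb{R}\to[0,+\infty)$ such that: (1) $G$ is compactly supported; (2) $G(x)\le C_1$ for all $x\in\mathbb{R}$; (3) $(-\Delta)^sG(x)\le -C_2|x|^{-(1+2s)}$ for all $x\in\mathbb{R}$ with $\mathrm{dist}(x,\mathrm{supp}(G))\ge1$.
   Context: $(-\Delta)^sw(x)=\sigma_s\,\mathrm{P.V.}\int_{\mathbb{R}}\frac{w(x)-w(y)}{|x-y|^{1+2s}}dy$ with $\sigma_s>0$ the standard normalization constant. *)

From HB Require Import structures.
From mathcomp Require Import all_boot all_order all_algebra.
From mathcomp Require Import all_classical all_reals all_analysis.
Set Implicit Arguments. Unset Strict Implicit. Unset Printing Implicit Defensive.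
Import Order.TTheory GRing.Theory Num.Theory.
Import numFieldNormedType.Exports.
Local Open Scope classical_set_scope.
Local Open Scope ring_scope.

Definition Gamma_fn {R : realType} (t : R) : R :=
  Rintegral (@lebesgue_measure R) `]0, +oo[%classic
    (fun x => x `^ (t - 1) * expR (- x)).

(* Standard normalisation constant of (-Delta)^s in dimension 1:
   sigma_s = s 4^s Gamma(1/2 + s) / (sqrt(pi) Gamma(1 - s)) *)
Definition sigma_s {R : realType} (s : R) : R :=
  s * 4 `^ s * Gamma_fn (2^-1 + s) / (Num.sqrt pi * Gamma_fn (1 - s)).

Definition fl_kernel {R : realType} (s : R) (w : R -> R) (x y : R) : R :=
  (w x - w y) / `|x - y| `^ (1 + 2 * s).

Definition frac_lap_eps {R : realType} (s : R) (w : R -> R) (x eps : R) : R :=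
  sigma_s s * Rintegral (@lebesgue_measure R) [set y | eps < `|x - y|]
                        (fl_kernel s w x).

(* (-Delta)^s w (x) exists as a principal value and equals L:
   each truncated integral is a genuine Lebesgue integral and they
   converge to L as eps -> 0+. *)
Definition frac_lap_is {R : realType} (s : R) (w : R -> R) (x L : R) : Prop :=
  (forall eps : R, 0 < eps ->
     (@lebesgue_measure R).-integrable [set y | eps < `|x - y|]
        (fun y => (fl_kernel s w x y)%:E)) /\
  (frac_lap_eps s w x eps @[eps --> 0^'+] --> L).

Definition supp {R : realType} (w : R -> R) : set R :=
  closure [set x | w x != 0].

From HB Require Import structures.
From mathcomp Require Import all_boot all_order all_algebra.
From mathcomp Require Import all_classical all_reals all_analysis.
From mathcomp Require Import measurable_realfun.
From mathcomp Require Import ring lra.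
Import Order.TTheory GRing.Theory Num.Theory.
Import numFieldNormedType.Exports.
Local Open Scope classical_set_scope.
Local Open Scope ring_scope.

(** Take for [G] the function equal to [C1] on [[-a, a]] and [0] elsewhere.
    At a point [x] with [|x - y| >= 1] on [[-a, a]] the principal value has
    no singularity: (-Delta)^s G(x) = - sigma_s C1 int_{-a}^{a} |x - y|^(-1-2s) dy.
    Since [|x - y| <= 2|x|] there, this is at most
    [- sigma_s C1 2a 2^(-1-2s) |x|^(-1-2s) <= - sigma_s C1 (a/4) |x|^(-1-2s)],
    and [a = 4 C2 / (sigma_s C1)] gives the claim. The only analytic input is
    [sigma_s > 0], i.e. that the Gamma integrals in its definition are finite
    and positive. *)

Section Gamma.
Context {R : realType}.
Local Notation mu := (@lebesgue_measure R).

Definition Gamma_integrand (t x : R) : R := x `^ (t - 1) * expR (- x).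

Lemma Gamma_integrand_ge0 (t x : R) : 0 <= Gamma_integrand t x.
Proof. by rewrite mulr_ge0 ?powR_ge0 ?expR_ge0. Qed.

Lemma measurable_Gamma_integrand (t : R) : measurable_fun setT (Gamma_integrand t).
Proof.
apply: measurable_funM; first exact: measurable_powR.
by apply: measurableT_comp; [exact: measurable_expR|exact: oppr_measurable].
Qed.

Lemma measurable_EFin_Gamma_integrand (t : R) (A : set R) :
  measurable_fun A (EFin \o Gamma_integrand t).
Proof.
by apply: measurableT_comp => //; apply: measurable_funTS; exact: measurable_Gamma_integrand.
Qed.

Lemma powR_continuous (t x : R) : 0 < x -> {for x, continuous (fun y : R => y `^ t)}.
Proof.
move=> x0; apply: differentiable_continuous; apply/derivable1_diffP.
by apply: derivable_powR; rewrite in_itv/= x0.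
Qed.

Lemma integral_powRB1_itvc1 (t a : R) : 0 < t -> 0 < a -> a < 1 ->
  (\int[mu]_(x in `[a, 1%R]) (x `^ (t - 1))%:E =
     (1 `^ t / t)%:E - (a `^ t / t)%:E)%E.
Proof.
move=> t0 a0 a1.
apply: (@continuous_FTC2 _ _ (fun x => x `^ t / t)) => //.
- apply: continuous_in_subspaceT => x; rewrite inE/= in_itv/= => /andP[ax _].
  exact: powR_continuous (lt_le_trans a0 ax).
- split.
  + move=> x; rewrite in_itv/= => /andP[ax _].
    apply: derivableM; last exact: derivable_cst.
    by apply: derivable_powR; rewrite in_itv/= (lt_trans a0 ax).
  + apply: cvg_at_right_filter; apply: cvgM; last exact: cvg_cst.
    exact: powR_continuous.
  + apply: cvg_at_left_filter; apply: cvgM; last exact: cvg_cst.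
    exact: powR_continuous.
- move=> x; rewrite in_itv/= => /andP[ax _].
  have x0 : 0 < x := lt_trans a0 ax.
  rewrite derive1Mr; last by apply: derivable_powR; rewrite in_itv/= x0.
  rewrite powR_derive1 ?in_itv/= ?x0//.
  by rewrite mulrAC divff ?gt_eqF// mul1r.
Qed.

Lemma integral_powRB1_itvc1_le (t a : R) : 0 < t -> 0 < a -> a < 1 ->
  (\int[mu]_(x in `[a, 1%R]) (x `^ (t - 1))%:E <= (t^-1)%:E)%E.
Proof.
move=> t0 a0 a1; rewrite integral_powRB1_itvc1// powR1 -EFinB lee_fin.
by rewrite div1r gerBl divr_ge0 ?powR_ge0 ?ltW.
Qed.

(* Monotone convergence along the intervals [[1/(n+2), 1]]. *)
Lemma integral_powRB1_itv01_le (t : R) : 0 < t ->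
  (\int[mu]_(x in `]0%R, 1%R]) (x `^ (t - 1))%:E <= (t^-1)%:E)%E.
Proof.
move=> t0.
pose a (n : nat) : R := n.+2%:R^-1.
have a0 n : 0 < a n by rewrite /a invr_gt0 ltr0n.
have a1 n : a n < 1 by rewrite /a invf_lt1 ?ltr0n// ltr1n.
have a_antitone n m : (n <= m)%N -> a m <= a n.
  by move=> nm; rewrite /a lef_pV2 ?posrE ?ltr0n// ler_nat ltnS ltnS.
pose f (x : R) : \bar R := (x `^ (t - 1))%:E.
pose g n : R -> \bar R := f \_ `[a n, 1%R].
pose D : set R := `]0%R, 1%R]%classic.
have aD n : `[a n, 1%R] `<=` D.
  move=> x /=; rewrite !in_itv/= => /andP[anx x1].
  by rewrite /D/= in_itv/= (lt_le_trans (a0 n) anx) x1.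
have mg n : measurable_fun D (g n).
  apply: measurable_funTS; apply/(measurable_restrictT _ _).1 => //.
  by apply: measurableT_comp => //; apply: measurable_funTS; exact: measurable_powR.
have g0 n x : D x -> (0 <= g n x)%E.
  by move=> _; rewrite /g patchE; case: ifP => // _; rewrite lee_fin powR_ge0.
have g_nd x : D x -> {homo g^~ x : n m / (n <= m)%N >-> (n <= m)%E}.
  move=> _ n m nm; rewrite /g !patchE.
  case: ifPn => [|_]; last by case: ifP => // _; rewrite lee_fin powR_ge0.
  rewrite !inE/= !in_itv/= => /andP[anx x1].
  by rewrite ifT// inE/= in_itv/= (le_trans (a_antitone _ _ nm) anx) x1.
have g_lim x : D x -> limn (g^~ x) = f x.
  rewrite /D/= in_itv/= => /andP[x0 x1]; apply: lim_near_cst => //.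
  have [n _ Hn] := near_infty_natSinv_lt (PosNum x0).
  exists n => // m /= nm; rewrite /g patchE ifT// inE/= in_itv/= x1 andbT.
  apply: ltW; apply: le_lt_trans (Hn m nm).
  by rewrite /a lef_pV2 ?posrE ?ltr0n// ler_nat.
have -> : (\int[mu]_(x in `]0%R, 1%R]) (x `^ (t - 1))%:E =
    \int[mu]_(x in D) limn (g^~ x))%E.
  by apply: eq_integral => x /set_mem/g_lim ->.
rewrite (monotone_convergence mu (measurable_itv _) mg g0 g_nd).
apply: lime_le.
  apply: ereal_nondecreasing_is_cvgn => n m nm.
  apply: ge0_le_integral => //; [exact: g0|exact: mg|exact: mg|].
  by move=> x Dx; exact: (g_nd x Dx n m nm).
apply: nearW => n.
by rewrite /g -integral_mkcondr setIidr// integral_powRB1_itvc1_le.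
Qed.

Lemma mulr_expRN_le (x : R) : 0 <= x -> x * expR (- x) <= 2 * expR (- (2^-1) * x).
Proof.
move=> x0.
have -> : - x = - (2^-1) * x + - (2^-1) * x by field.
rewrite expRD mulrA ler_wpM2r ?expR_ge0//.
rewrite mulNr expRN ler_pdivrMr ?expR_gt0//.
apply: le_trans (_ : 2 * (1 + 2^-1 * x) <= _); last first.
  by rewrite ler_wpM2l// expR_ge1Dx.
by rewrite mulrDr mulr1 mulrA divff// mul1r lerDr.
Qed.

Lemma Gamma_integral_itv01_le (t : R) : 0 < t ->
  (\int[mu]_(x in `]0%R, 1%R]) (Gamma_integrand t x)%:E <= (t^-1)%:E)%E.
Proof.
move=> t0; apply: (le_trans _ (integral_powRB1_itv01_le t t0)).
apply: ge0_le_integral => //.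
- by move=> x _; rewrite lee_fin Gamma_integrand_ge0.
- exact: measurable_EFin_Gamma_integrand.
- by apply: measurableT_comp => //; apply: measurable_funTS; exact: measurable_powR.
- move=> x; rewrite /= in_itv/= => /andP[x0 _].
  by rewrite lee_fin ler_piMr ?powR_ge0// expR_le1 oppr_le0 ltW.
Qed.

(* The integrand is dominated by [4] times the density of the exponential law
   of parameter [1/2]. *)
Lemma Gamma_integral_itv1y_lty (t : R) : t <= 2 ->
  (\int[mu]_(x in `]1%R, +oo[) (Gamma_integrand t x)%:E < +oo)%E.
Proof.
move=> t2.
pose e x : R := 4 * exponential_pdf (2^-1) x.
have mp : measurable_fun setT (exponential_pdf (2^-1 : R)).
  exact: measurable_exponential_pdf.
have me : measurable_fun setT e by exact: measurable_funM.
have e0 x : (0 <= (e x)%:E)%E by rewrite lee_fin mulr_ge0// exponential_pdf_ge0.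
apply: (@le_lt_trans _ _ (\int[mu]_(x in [set: R]) (e x)%:E)%E).
  apply: (@le_trans _ _ (\int[mu]_(x in `]1%R, +oo[) (e x)%:E)%E).
    apply: ge0_le_integral => //.
    + by move=> x _; rewrite lee_fin Gamma_integrand_ge0.
    + exact: measurable_EFin_Gamma_integrand.
    + by apply: measurableT_comp => //; exact: measurable_funTS.
    + move=> x; rewrite /= in_itv/= andbT => x1.
      have x0 : 0 <= x by rewrite ltW// (lt_trans _ x1).
      rewrite lee_fin /e exponential_pdfE// mulrA.
      have -> : 4 * 2^-1 = 2 :> R by field.
      apply: le_trans (mulr_expRN_le x x0); rewrite ler_wpM2r ?expR_ge0//.
      rewrite -[leRHS]powRr1// ler_powR ?(ltW x1)//; lra.
  apply: ge0_subset_integral => //.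
  by apply: measurableT_comp => //.
under eq_integral do rewrite EFinM.
rewrite ge0_integralZl//; last first.
- by move=> x _; rewrite lee_fin exponential_pdf_ge0.
- by apply: measurableT_comp => //.
by rewrite integral_exponential_pdf// mule1 ltry.
Qed.

Lemma Gamma_integral_lty (t : R) : 0 < t -> t <= 2 ->
  (\int[mu]_(x in `]0%R, +oo[) (Gamma_integrand t x)%:E < +oo)%E.
Proof.
move=> t0 t2.
rewrite (@itv_bndbnd_setU _ _ _ (BRight 1%R)) ?bnd_simp//.
rewrite ge0_integral_setU //=.
- apply: lte_add_pinfty; last exact: Gamma_integral_itv1y_lty.
  exact: le_lt_trans (Gamma_integral_itv01_le t t0) (ltry _).
- exact: measurable_EFin_Gamma_integrand.
- by move=> x _; rewrite lee_fin Gamma_integrand_ge0.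
- apply/eqP/seteqP; split => // x [] /=; rewrite !in_itv/= => /andP[_ x1] /andP[+ _].
  by rewrite ltNge x1.
Qed.

Lemma Gamma_fn_gt0 (t : R) : 0 < t -> t <= 2 -> 0 < Gamma_fn t.
Proof.
move=> t0 t2; apply: fine_gt0; apply/andP; split; last exact: Gamma_integral_lty.
pose c : R := expR (-2) / 2.
have c0 : 0 < c by rewrite divr_gt0 ?expR_gt0.
apply: (@lt_le_trans _ _ c%:E); first by rewrite lte_fin.
have <- : (\int[mu]_(x in `[1%R, 2%R]) (cst c%:E x) = c%:E)%E.
  rewrite integral_cst//= lebesgue_measure_itv/= lte_fin ltr1n -EFinD.
  by rewrite -EFinM -[2]/(1 + 1 : R) addrK mulr1.
apply: (@le_trans _ _ (\int[mu]_(x in `[1%R, 2%R]) (Gamma_integrand t x)%:E)%E).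
  apply: ge0_le_integral => //.
  - by move=> x _; rewrite lee_fin ltW.
  - exact: measurable_EFin_Gamma_integrand.
  move=> x; rewrite /= in_itv/= => /andP[x1 x2].
  have x0 : 0 < x by rewrite (lt_le_trans _ x1).
  rewrite lee_fin /c /Gamma_integrand mulrC; apply: ler_pM.
  - by rewrite invr_ge0.
  - exact: expR_ge0.
  - apply: (@le_trans _ _ (x `^ (-1))).
      by rewrite (powR_inv1 (ltW x0)) lef_pV2 ?posrE.
    rewrite ler_powR//; lra.
  - by rewrite ler_expR lerN2.
apply: ge0_subset_integral => //.
- exact: measurable_EFin_Gamma_integrand.
- by move=> x _; rewrite lee_fin Gamma_integrand_ge0.
- by move=> x; rewrite /= !in_itv/= andbT => /andP[x1 _]; rewrite (lt_le_trans _ x1).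
Qed.

Lemma sigma_s_gt0 (s : R) : 0 < s -> s < 1 -> 0 < sigma_s s.
Proof.
move=> s0 s1; rewrite /sigma_s.
apply: divr_gt0; last apply: mulr_gt0.
- rewrite mulr_gt0// ?mulr_gt0// ?powR_gt0// Gamma_fn_gt0//.
    by rewrite addr_gt0// invr_gt0.
  lra.
- by rewrite sqrtr_gt0 pi_gt0.
- rewrite Gamma_fn_gt0//; lra.
Qed.

End Gamma.

Section OffSupport.
Context {R : realType}.
Local Notation mu := (@lebesgue_measure R).

Lemma measurable_dist_powR (x p : R) : measurable_fun setT (fun y : R => `|x - y| `^ p).
Proof.
exact: measurableT_comp (measurable_powR p)
  (measurableT_comp (@normr_measurable R setT) (measurable_funB _ _)).
Qed.

Lemma measurable_dist_gt (x eps : R) : measurable [set y : R | eps < `|x - y|].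
Proof.
have mdist : measurable_fun setT (fun y : R => `|x - y|).
  by apply: measurableT_comp; [exact: normr_measurable|exact: measurable_funB].
have := mdist measurableT _ (measurable_itv `]eps, +oo[).
by rewrite setTI; congr measurable; apply/seteqP; split => y /=; rewrite in_itv/= andbT.
Qed.

Lemma ler_powRN (u v p : R) : 0 < u -> u <= v -> 0 <= p -> v `^ (- p) <= u `^ (- p).
Proof.
move=> u0 uv p0; have v0 := lt_le_trans u0 uv.
rewrite !powRN lef_pV2 ?posrE ?powR_gt0//.
by apply: ge0_ler_powR => //; rewrite nnegrE ltW.
Qed.

Variables (s : R) (w : R -> R) (I : set R) (x d M : R).
Hypotheses (s_ge0 : 0 <= s) (mI : measurable I) (muI : (mu I < +oo)%E)
  (mw : measurable_fun I w) (w_le : forall y, I y -> `|w y| <= M)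
  (w_off : forall y, ~ I y -> w y = 0) (d_gt0 : 0 < d)
  (d_le_dist : forall y, I y -> d <= `|x - y|).

Definition off_support_kernel (y : R) : R := - w y * `|x - y| `^ (- (1 + 2 * s)).

Lemma integrable_off_support_kernel : mu.-integrable I (EFin \o off_support_kernel).
Proof.
have p_ge0 : 0 <= 1 + 2 * s by rewrite addr_ge0 ?mulr_ge0.
apply: measurable_bounded_integrable => //.
  apply: measurable_funM; first exact: measurable_funN.
  exact: measurable_funTS (measurable_dist_powR _ _).
rewrite /bounded_near; near=> B => y Iy /=.
rewrite /off_support_kernel normrM normrN ger0_norm ?powR_ge0//.
apply: (@le_trans _ _ (M * d `^ (- (1 + 2 * s)))).
  apply: ler_pM; [exact: normr_ge0|exact: powR_ge0|exact: w_le|].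
  exact: ler_powRN _ _ _ d_gt0 (d_le_dist _ Iy) p_ge0.
by near: B; apply: nbhs_pinfty_ge; exact: num_real.
Unshelve. all: by end_near.
Qed.

Lemma fl_kernel_off_support : fl_kernel s w x = off_support_kernel \_ I.
Proof.
have wx : w x = 0.
  by apply: w_off => /d_le_dist; rewrite subrr normr0 leNgt d_gt0.
apply/funext => y; rewrite /fl_kernel wx sub0r patchE.
case: ifPn => [_|/negP Iy]; first by rewrite /off_support_kernel powRN.
by rewrite w_off ?oppr0 ?mul0r// => /mem_set.
Qed.

(* For [eps < d] the truncation region contains [I], where all the mass is. *)
Lemma frac_lap_is_off_support :
  frac_lap_is s w x (sigma_s s * \int[mu]_(y in I) off_support_kernel y).
Proof.
have kI := integrable_off_support_kernel.
split => [eps eps0|].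
  have kT := (integrable_mkcond (mu := mu) _ mI).1 kI; rewrite restrict_EFin in kT.
  rewrite fl_kernel_off_support.
  apply: (integrableS measurableT) => //; first exact: measurable_dist_gt.
apply: cvg_near_cst; near=> eps.
rewrite /frac_lap_eps fl_kernel_off_support -Rintegral_mkcondl setIidl// => y Iy /=.
apply: lt_le_trans (d_le_dist _ Iy).
by near: eps; exact: nbhs_right_lt.
Unshelve. all: by end_near.
Qed.

Lemma Rintegral_off_support_kernel_le (m D : R) : 0 <= m ->
  (forall y, I y -> m <= w y) -> (forall y, I y -> `|x - y| <= D) ->
  \int[mu]_(y in I) off_support_kernel y <=
    - (m * D `^ (- (1 + 2 * s))) * fine (mu I).
Proof.
move=> m_ge0 m_le_w dist_le.
have p_ge0 : 0 <= 1 + 2 * s by rewrite addr_ge0 ?mulr_ge0.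
rewrite -Rintegral_cst//; apply: le_Rintegral => //.
- exact: integrable_off_support_kernel.
- by apply: measurable_bounded_integrable => //; exact: bounded_cst.
move=> y Iy; rewrite /off_support_kernel mulNr lerN2.
have dist_gt0 : 0 < `|x - y| := lt_le_trans d_gt0 (d_le_dist _ Iy).
apply: ler_pM => //; first exact: powR_ge0.
- exact: m_le_w.
- exact: ler_powRN _ _ _ dist_gt0 (dist_le _ Iy) p_ge0.
Qed.

Lemma frac_lap_off_support_le (m D : R) : 0 <= sigma_s s -> 0 <= m ->
  (forall y, I y -> m <= w y) -> (forall y, I y -> `|x - y| <= D) ->
  exists2 L, frac_lap_is s w x L &
    L <= - (sigma_s s * m * D `^ (- (1 + 2 * s)) * fine (mu I)).
Proof.
move=> sig_ge0 m_ge0 m_le_w dist_le.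
exists (sigma_s s * \int[mu]_(y in I) off_support_kernel y).
  exact: frac_lap_is_off_support.
have -> : - (sigma_s s * m * D `^ (- (1 + 2 * s)) * fine (mu I)) =
    sigma_s s * (- (m * D `^ (- (1 + 2 * s))) * fine (mu I)) by ring.
exact/(ler_wpM2l sig_ge0)/Rintegral_off_support_kernel_le.
Qed.

End OffSupport.

Lemma supp_patch_cst {R : realType} (A : set R) (c : R) :
  c != 0 -> closed A -> supp ((fun=> c) \_ A) = A.
Proof.
move=> c0 cA; rewrite /supp.
have -> : [set y | ((fun=> c) \_ A) y != 0] = A.
  apply/seteqP; split => y /=; rewrite patchE.
    by case: ifPn => [/set_mem //|]; rewrite eqxx.
  by move=> Ay; rewrite ifT ?inE.
exact/esym/closure_id.
Qed.

Lemma inv8_le_powR2N {R : realType} (p : R) : p <= 3 -> 8^-1 <= 2 `^ (- p) :> R.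
Proof.
move=> p3; rewrite powRN lef_pV2 ?posrE ?powR_gt0//.
have -> : 8 = 2 `^ 3%:R :> R by rewrite powR_mulrn// -natrX.
by rewrite ler_powR ?ler1n.
Qed.

(* [|x - y| <= 2 |x|] on [[-a, a]], and [2a 2^(-1-2s) >= a/4]. *)
Lemma frac_lap_bump_le {R : realType} {s a c x : R} : 0 < s -> s < 1 -> 0 < a -> 0 < c ->
  (forall y, `[- a, a]%classic y -> 1 <= `|x - y|) ->
  exists2 L, frac_lap_is s ((fun=> c) \_ `[- a, a]) x L &
    L * `|x| `^ (1 + 2 * s) <= - (sigma_s s * c * a / 4).
Proof.
move=> s0 s1 a0 c0 x_far.
have sig0 := sigma_s_gt0 s s0 s1.
set I : set R := `[- a, a]%classic; set G := (fun=> c) \_ I.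
have G_on y : I y -> G y = c by move=> Iy; rewrite /G patchE ifT ?inE.
have G_off y : ~ I y -> G y = 0 by move=> Iy; rewrite /G patchE ifN// notin_setE.
have mG : measurable_fun I G.
  by apply: measurable_funTS; apply/(measurable_restrictT _ _).1;
    [exact: measurable_itv|exact: measurable_cst].
have a_lt_x : a < `|x|.
  rewrite ltNge; apply/negP => xa.
  by have := x_far x; rewrite subrr normr0 ler10 /I/= in_itv/= -ler_norml => /(_ xa).
have dist_le y : I y -> `|x - y| <= 2 * `|x|.
  move=> Iy; apply: (le_trans (ler_normB _ _)); rewrite mulr2n mulrDl mul1r lerD2l.
  by apply: le_trans (ltW a_lt_x); rewrite ler_norml.
have muI : lebesgue_measure I = (a + a)%:E.
  by rewrite /I lebesgue_measure_itv/= lte_fin gtrN// opprK.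
have muI_lty : (lebesgue_measure I < +oo)%E by rewrite muI ltry.
have G_norm y : I y -> `|G y| <= c by move=> Iy; rewrite G_on// gtr0_norm.
have G_ge y : I y -> c <= G y by move=> Iy; rewrite G_on.
have [L fracL L_le] := frac_lap_off_support_le s G I x 1 c
  (ltW s0) (measurable_itv _) muI_lty mG G_norm G_off ltr01 x_far c (2 * `|x|)
  (ltW sig0) (ltW c0) G_ge dist_le.
exists L => //.
set p := 1 + 2 * s; set q := 2 `^ (- p).
have q_ge : 8^-1 <= q by apply: inv8_le_powR2N; rewrite /p; lra.
have xpN_xp : `|x| `^ (- p) * `|x| `^ p = 1.
  by rewrite powRN mulVf// gt_eqF// powR_gt0// (lt_trans a0 a_lt_x).
rewrite muI /= powRM ?ler0n// -/q in L_le.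
apply: le_trans (ler_wpM2r (powR_ge0 _ _) L_le) _.
rewrite [X in X <= _](_ : _ = - (2 * q * (sigma_s s * c * a)) * (`|x| `^ (- p) * `|x| `^ p));
  last by ring.
have : 0 < sigma_s s * c * a by apply: mulr_gt0 => //; exact: mulr_gt0.
by rewrite xpN_xp mulr1; nra.
Qed.

Theorem mainTheorem12 (R : realType) (s : R) (hs0 : 0 < s) (hs1 : s < 1)
  (C1 C2 : R) (hC1 : 0 < C1) (hC2 : 0 < C2) :
  exists G : R -> R,
    (forall x, 0 <= G x) /\
    measurable_fun setT G /\
    compact (supp G) /\
    (forall x, G x <= C1) /\
    (forall x, (forall y, supp G y -> 1 <= `|x - y|) ->
       exists L, frac_lap_is s G x L /\ L * `|x| `^ (1 + 2 * s) <= - C2).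
Proof.
have sig0 : 0 < sigma_s s by exact: sigma_s_gt0.
pose a := 4 * C2 / (sigma_s s * C1).
have a0 : 0 < a by apply: divr_gt0; apply: mulr_gt0.
pose G := (fun=> C1) \_ `[- a, a]%classic.
have suppG : supp G = `[- a, a]%classic.
  by apply: supp_patch_cst; [rewrite gt_eqF|exact: itv_closed].
exists G; split.
  by move=> y; rewrite /G patchE; case: ifP => // _; exact: ltW.
split.
  by apply/(measurable_restrictT _ _).1; [exact: measurable_itv|exact: measurable_cst].
split; first by rewrite suppG; exact: segment_compact.
split; first by move=> y; rewrite /G patchE; case: ifP => // _; exact: ltW.
move=> x; rewrite suppG => x_far.
have [L fracL L_le] := frac_lap_bump_le hs0 hs1 a0 hC1 x_far.
exists L; split => //; apply: le_trans L_le _.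
suff -> : sigma_s s * C1 * a / 4 = C2 by [].
by rewrite /a; field; rewrite !gt_eqF.
Qed.
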